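(* Let $p$ be a prime and $m,n$ positive integers. Then $$\tfrac12\big[(m+n)^{2p}+(n\bmod 2)(m+n)^p\big]\equiv\tfrac12\big[m^{2p}+(n\bmod2)m^p\big]\pmod n,$$ i.e., the difference of the two sides is an integer divisible by $n$. *)

From HB Require Import structures.
From mathcomp Require Import all_boot all_order all_algebra.
Set Implicit Arguments. Unset Strict Implicit. Unset Printing Implicit Defensive.
Import Order.TTheory GRing.Theory Num.Theory.
Local Open Scope ring_scope.

Definition half_expr (x n p : nat) : rat :=
  (1 / 2) * ((x%:R) ^+ (2 * p) + (n %% 2)%N%:R * (x%:R) ^+ p).

From mathcomp Require Import all_boot all_algebra.
From mathcomp Require Import zify.
Import GRing.Theory.

(* Writing F(x) = x^(2p) + (n mod 2) x^p, it suffices to show that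
   F(m + n) = F(m) mod 2n.  For even n, squares are determined modulo 2n by
   residues modulo n, since (x + qn)^2 = x^2 + 2qxn + q^2 (n/2) 2n, so
   x^(2p) = (x^2)^p depends only on x mod n.  For odd n, 2 and
   n are coprime; F(x) = x^p (x^p + 1) is even, and modulo n it depends only on
   x mod n. *)

Definition twice_half_expr (x n p : nat) : nat := x ^ (2 * p) + (n %% 2) * x ^ p.

Lemma sqrn_mod_double (n x : nat) :
  ~~ odd n -> x ^ 2 = (x %% n) ^ 2 %[mod 2 * n].
Proof.
move=> even_n; have [h ->] : exists h, n = 2 * h by exists n./2; lia.
rewrite {1}(divn_eq x (2 * h)); set q := x %/ _; set r := x %% _.
have -> : (q * (2 * h) + r) ^ 2 = (q * q * h + q * r) * (2 * (2 * h)) + r ^ 2.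
  by rewrite !expnS !expn0; nia.
by rewrite modnMDl.
Qed.

Lemma expn_double_congr_even (n p x y : nat) :
  ~~ odd n -> x = y %[mod n] -> x ^ (2 * p) = y ^ (2 * p) %[mod 2 * n].
Proof.
move=> even_n xy; rewrite !expnM.
by rewrite -modnXm sqrn_mod_double // xy -sqrn_mod_double // modnXm.
Qed.

Lemma expn_double_add_congr_odd (n p x y : nat) :
  odd n -> x = y %[mod n] ->
  x ^ (2 * p) + x ^ p = y ^ (2 * p) + y ^ p %[mod 2 * n].
Proof.
move=> odd_n xy; apply/eqP; rewrite chinese_remainder ?coprime2n ?odd_n //.
apply/andP; split.
  have even_F z : ~~ odd (z ^ (2 * p) + z ^ p).
    by rewrite mulnC expnM -addn1 -mulnSr oddM oddS; case: odd.
  by rewrite !modn2 (negbTE (even_F x)) (negbTE (even_F y)).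
have xy_exp k : x ^ k = y ^ k %[mod n] by rewrite -modnXm xy modnXm.
by rewrite -modnDm !xy_exp modnDm.
Qed.

Lemma twice_half_expr_congr (n p x y : nat) :
  x = y %[mod n] -> twice_half_expr x n p = twice_half_expr y n p %[mod 2 * n].
Proof.
rewrite /twice_half_expr modn2; case: (boolP (odd n)) => [odd_n|even_n] xy.
  by rewrite !mul1n; apply: expn_double_add_congr_odd.
by rewrite !mul0n !addn0; apply: expn_double_congr_even.
Qed.

Local Open Scope ring_scope.

Lemma half_exprE (x n p : nat) :
  half_expr x n p = (twice_half_expr x n p)%:R / 2.
Proof. by rewrite /half_expr natrD natrM !natrX mulrC div1r. Qed.

Lemma half_diff_of_congr (a b n : nat) :
  (a = b %[mod 2 * n])%N ->
  exists k : int, a%:R / 2 - b%:R / 2 = (k * n%:Z)%:~R :> rat.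
Proof.
move=> ab; have /dvdzP [k Ek] : ((2 * n)%:Z %| a%:Z - b%:Z)%Z.
  by rewrite -eqz_mod_dvd; apply/eqP; rewrite !modz_nat ab.
move/(congr1 (intr : int -> rat)): Ek.
rewrite intrB !intrM /= -!pmulrn natrM => Ek.
by exists k; rewrite -mulrBl Ek intrM mulrCA mulrC mulKf.
Qed.

Theorem lemma4 (p m n : nat) :
  prime p -> (0 < m)%N -> (0 < n)%N ->
  exists k : int,
    half_expr (m + n) n p - half_expr m n p = ((k * n%:Z)%:~R : rat).
Proof.
move=> _ _ _; rewrite !half_exprE; apply: half_diff_of_congr.
by apply: twice_half_expr_congr; rewrite modnDr.
Qed.
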